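(* Let $\mathcal{H},\mathcal{G}$ be Sperner hypergraphs on a vertex set $V$ with $n=|V|$, $\mathcal{G}\subseteq Tr(\mathcal{H})$ and $\mathcal{H}\subseteq Tr(\mathcal{G})$. The procedure Dualize described below, run with $k=\textsc{VC-dim}(\mathcal{H})+1$, runs in time $(n|\mathcal{G}|)^{O(\log|\mathcal{H}|)}$.
   Context: A transversal meets every hyperedge; $Tr(\cdot)$ denotes the hypergraph of inclusion-minimal transversals. $\textsc{VC-dim}(\mathcal{H})$ is the largest size of a set $U$ such that every $U'\subseteq U$ equals $F\cap U$ for some $F\in\mathcal{H}$. A $k$-trace on $V$ is a pair $(T,S)$ with $S\subseteq V$, $|S|=k$, $T\subseteq S$, realized by $F$ if $F\cap S=T$; $\mathrm{traces}_k(\mathcal{H})$ is the set of $k$-traces realized by hyperedges of $\mathcal{H}$; $\mathrm{ext}_k(\mathcal{H})$ is the set of all $E\subseteq V$ all of whose realized $k$-traces lie in $\mathrm{traces}_k(\mathcal{H})$. Procedure Dualize$(\mathcal{H},\mathcal{G},k)$: (1) for each $k$-trace $(T,S)\notin\mathrm{traces}_k(\mathcal{H})$, test (via the sub-transversal test in time $O(n|\mathcal{G}|^{|T|+1})$) whether some $E\in Tr(\mathcal{G})$ realizes $(T,S)$, and if so return such $E$; (2) compute $\mathrm{ext}_k(\mathcal{H})$ (by adding vertices one at a time and keeping, for each retained set $E$, those of $E$ and $E\cup\{v_i\}$ whose $k$-traces containing $v_i$ are realized by $\{F\cap\{v_1,\dots,v_i\}:F\in\mathcal{H}\}$), and for each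 $E\in\mathrm{ext}_k(\mathcal{H})$ contained in no hyperedge of $\mathcal{H}$, if $E\in Tr(\mathcal{G})$ return $E$; (3) return ''Yes''. *)

(* Hypergraphs on the vertex set V = 'I_n, vertices ordered
   v_1 < ... < v_n as the ordinals 0 < ... < n-1. *)
From mathcomp Require Import all_boot.
Set Implicit Arguments. Unset Strict Implicit. Unset Printing Implicit Defensive.

Section Hyp.
Variable n : nat.
Notation V := 'I_n.
Notation hyp := {set {set V}}.

Definition sperner (H : hyp) : Prop :=
  forall E F, E \in H -> F \in H -> E \subset F -> E = F.

Definition transversal (G : hyp) (E : {set V}) : bool :=
  [forall F in G, ~~ [disjoint E & F]].

Definition Tr (G : hyp) : hyp :=
  [set E | transversal G E && [forall E' : {set V}, (E' \proper E) ==> ~~ transversal G E']].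

Definition shattered (H : hyp) (U : {set V}) : bool :=
  [forall U' in powerset U, [exists F in H, F :&: U == U']].

Definition vc_dim (H : hyp) : nat := \max_(U : {set V} | shattered H U) #|U|.

Definition is_ktrace (k : nat) (TS : {set V} * {set V}) : bool :=
  (#|TS.2| == k) && (TS.1 \subset TS.2).

Definition traces (k : nat) (H : hyp) : {set {set V} * {set V}} :=
  [set TS | is_ktrace k TS && [exists F in H, F :&: TS.2 == TS.1]].

Definition ext (k : nat) (H : hyp) : hyp :=
  [set E | [forall S : {set V}, (#|S| == k) ==> ((E :&: S, S) \in traces k H)]].

(* prefix {v_1,...,v_i} and the vertex v_i (ordinal of value i-1) *)
Definition prefix (i : nat) : {set V} := [set v : V | val v < i].
Definition vtx (i : nat) : {set V} := [set v : V | val v == i.-1].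

Definition new_ksets (k i : nat) : {set {set V}} :=
  [set S : {set V} | (S \subset prefix i) && (#|S| == k) && (vtx i \subset S)].

Definition stage_ok (k : nat) (H : hyp) (i : nat) (E : {set V}) : bool :=
  [forall S in new_ksets k i,
     [exists F in H, (F :&: prefix i) :&: S == E :&: S]].

(* the family retained after processing v_1..v_i in step (2) *)
Fixpoint retained (k : nat) (H : hyp) (i : nat) : hyp :=
  match i with
  | 0 => [set set0]
  | i'.+1 =>
      [set E' | [exists E in retained k H i',
                  (E' == E) || (E' == E :|: vtx i'.+1)]
                && stage_ok k H i'.+1 E']
  end.

(* ---- cost model (unit-cost operations) ----
   checking whether a set is realized as a trace by H : n|H|+1
   sub-transversal test for (T,S) : n |G|^(|T|+1)  (as given in the paper)
   test E \in Tr(G)                : n^2 |G| + 1                           *)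
Definition cost_trace_check (H : hyp) : nat := (n * #|H|).+1.

Definition cost_step1 (H G : hyp) (k : nat) : nat :=
  \sum_(TS : {set V} * {set V} | is_ktrace k TS)
     (cost_trace_check H +
      (if TS \notin traces k H then n * #|G| ^ (#|TS.1|.+1) else 0)).

Definition cost_stage (H : hyp) (k i : nat) : nat :=
  (2 * #|retained k H i.-1| * (#|new_ksets k i| * cost_trace_check H).+1).+1.

Definition cost_step2 (H G : hyp) (k : nat) : nat :=
  \sum_(1 <= i < n.+1) cost_stage H k i
  + \sum_(E in retained k H n)
      (#|H| * cost_trace_check H + (n * n * #|G|).+1).

Definition dualize_cost (H G : hyp) (k : nat) : nat :=
  (cost_step1 H G k + cost_step2 H G k).+1.

End Hyp.

(* A family shattering a d-set has at least 2^d members, so k = VC-dim(H) + 1 is at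
   most log|H| + 1 and step (1) inspects at most (n+1)^(2k) traces, each tested in
   time n|G|^(k+1).  In step (2), every set retained after v_1..v_i realizes on
   {v_1..v_i} only k-traces of H; hence a k-set shattered by the retained family
   would be shattered by H, so that family has VC-dimension below k.  By Pajor's
   lemma (a family has at most as many members as it shatters sets) it then has
   at most (n+1)^(k-1) members.  All the costs are therefore polynomial in
   B = ((n+1)(|G|+1))^(log|H|+1), in fact at most 10 B^5. *)

From Pilot Require Import Defs.
From mathcomp Require Import all_boot zify.
Set Implicit Arguments. Unset Strict Implicit. Unset Printing Implicit Defensive.

Section Hypergraphs.
Variable n : nat.
Notation V := 'I_n.
Notation hyp := {set {set V}}.
Implicit Types (F H : hyp) (U S T : {set V}).

Lemma shatteredP F U :
  reflect (forall T, T \subset U -> exists2 E, E \in F & E :&: U = T) (shattered F U).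
Proof.
apply: (iffP forall_inP) => shU T sTU.
  have /exists_inP[E EF /eqP EU] : [exists E in F, E :&: U == T].
    by apply: shU; rewrite powersetE.
  by exists E.
rewrite powersetE in sTU; have [E EF EU] := shU T sTU.
by apply/exists_inP; exists E; rewrite ?EU.
Qed.

Lemma sub_shattered F U S : S \subset U -> shattered F U -> shattered F S.
Proof.
move=> sSU /shatteredP shU; apply/shatteredP => T sTS.
have [E EF EU] := shU T (subset_trans sTS sSU); exists E => //.
by rewrite -(setIidPr sSU) setIA EU; apply/setIidPl.
Qed.

Lemma shattered_mono F F' U : F \subset F' -> shattered F U -> shattered F' U.
Proof.
move=> sFF' /shatteredP shU; apply/shatteredP => T /shU[E EF EU].
by exists E; rewrite ?(subsetP sFF').
Qed.

Lemma card_shattered F U : shattered F U -> 2 ^ #|U| <= #|F|.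
Proof.
move=> /shatteredP shU; rewrite -card_powerset.
apply: leq_trans (leq_imset_card (fun E => E :&: U) F); apply: subset_leq_card.
by apply/subsetP => T; rewrite inE => /shU[E EF <-]; apply: imset_f.
Qed.

Lemma leq_vc_dim H U : shattered H U -> #|U| <= vc_dim H.
Proof. exact: leq_bigmax_cond. Qed.

Lemma vc_dim_leq_log H : vc_dim H <= trunc_log 2 #|H|.
Proof. by apply/bigmax_leqP => U /card_shattered; apply: trunc_log_max. Qed.

Definition shattered_sets F : {set {set V}} := [set U | shattered F U].

Section PajorSplit.
Variables (F : hyp) (x : V).
Let P := [set E : {set V} | x \in E].
Let F1 := F :&: P.
Let F0 := F :\: P.

Lemma notin_shattered0 U : shattered F0 U -> x \notin U.
Proof.
move=> /shatteredP/(_ U (subxx U))[E]; rewrite !inE => /andP[xNE _] <-.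
by rewrite inE negb_and xNE.
Qed.

Lemma notin_shattered1 U : shattered F1 U -> x \notin U.
Proof.
move=> /shatteredP/(_ set0 (sub0set U))[E]; rewrite !inE => /andP[_ xE] /setP/(_ x).
by rewrite !inE xE /= => ->.
Qed.

Lemma shattered_setU1 U : shattered F0 U -> shattered F1 U -> shattered F (x |: U).
Proof.
move=> sh0 sh1; have xNU := notin_shattered0 sh0.
move/shatteredP: sh0 => sh0; move/shatteredP: sh1 => sh1.
apply/shatteredP => T sTxU.
have sTxU' : T :\ x \subset U by rewrite subDset.
have [xT | xNT] := boolP (x \in T).
  have [E] := sh1 _ sTxU'; rewrite !inE => /andP[EF xE] EU.
  exists E => //; rewrite setIUr EU (setIidPr _) ?sub1set //.
  by rewrite setD1K.
have [E] := sh0 _ sTxU'; rewrite !inE => /andP[xNE EF] EU.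
exists E => //; rewrite setIUr EU; apply/setP => y; rewrite !inE.
by have [->|] := eqVneq y x; rewrite ?(negbTE xNE) ?(negbTE xNT) ?andbF.
Qed.

Lemma pajor_step :
  #|F0| <= #|shattered_sets F0| -> #|F1| <= #|shattered_sets F1| ->
  #|F| <= #|shattered_sets F|.
Proof.
move=> le0 le1; set s0 := shattered_sets F0; set s1 := shattered_sets F1.
set s01 := (fun U => x |: U) @: (s0 :&: s1).
have card_s01 : #|s01| = #|s0 :&: s1|.
  apply: card_in_imset => U U'; rewrite !inE => /andP[/notin_shattered0 xNU _].
  case/andP=> /notin_shattered0 xNU' _ eqxU.
  by rewrite -(setU1K xNU) -(setU1K xNU') eqxU.
have disj : [disjoint s0 :|: s1 & s01].
  rewrite -setI_eq0; apply/set0Pn => -[W /setIP[shW /imsetP[U _ eqW]]].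
  move: shW; rewrite eqW !inE.
  by case/orP=> [/notin_shattered0|/notin_shattered1]; rewrite setU11.
have sub : (s0 :|: s1) :|: s01 \subset shattered_sets F.
  apply/subsetP => U; rewrite !inE => /orP[/orP[]|/imsetP[U' ]].
  - exact: shattered_mono (subsetDl F P).
  - exact: shattered_mono (subsetIl F P).
  by rewrite !inE => /andP[sh0 sh1] ->; apply: shattered_setU1.
apply: leq_trans (subset_leq_card sub).
rewrite cardsU (disjoint_setI0 disj) cards0 subn0 card_s01 cardsUI -(cardsID P F).
by rewrite addnC leq_add.
Qed.
End PajorSplit.

Lemma pajor F : #|F| <= #|shattered_sets F|.
Proof.
have [m] := ubnP #|F|; elim: m F => // m IHm F; rewrite ltnS => leFm.
have [leF1 | /card_gt1P[E1 [E2 [E1F E2F neqE]]]] := leqP #|F| 1.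
  have [-> // | /card_gt0P[E EF]] := posnP #|F|.
  apply: leq_trans leF1 _; apply/card_gt0P; exists set0; rewrite inE.
  by apply/shatteredP => T; rewrite subset0 => /eqP->; exists E; rewrite ?setI0.
wlog nsubE : E1 E2 E1F E2F neqE / ~~ (E1 \subset E2).
  move=> hw; have [sE12|] := boolP (E1 \subset E2); last exact: hw.
  apply: (hw E2 E1) => //; first by rewrite eq_sym.
  by apply: contra neqE => sE21; rewrite eqEsubset sE12.
have /subsetPn[x xE1 xNE2] := nsubE.
apply: (pajor_step (x := x)); apply: IHm; apply: leq_trans _ leFm; apply: proper_card.
  by apply/properP; split; [apply: subsetDl | exists E1; rewrite // !inE xE1].
apply/properP; split; first exact: subsetIl.
by exists E2; rewrite // !inE (negbTE xNE2) andbF.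
Qed.

Lemma exists_subset_card S k :
  k <= #|S| -> exists2 S' : {set V}, S' \subset S & #|S'| = k.
Proof.
rewrite -bin_gt0 -cards_draws => /card_gt0P[S']; rewrite inE => /andP[sS'S /eqP cS'].
by exists S'.
Qed.

Lemma card_small_sets m : #|[set S : {set V} | #|S| <= m]| <= n.+1 ^ m.
Proof.
pose set_of (f : {ffun 'I_m -> option V}) := [set v | Some v \in codom f].
have -> : n.+1 ^ m = #|[set: {ffun 'I_m -> option V}]|.
  by rewrite cardsT card_ffun card_option !card_ord.
apply: leq_trans (leq_imset_card set_of _); apply: subset_leq_card.
apply/subsetP => S; rewrite inE => leSm; apply/imsetP.
exists [ffun i : 'I_m => nth None (map Some (enum S)) i]; rewrite ?inE //.
apply/setP => v; rewrite inE; apply/idP/codomP => [vS | [i]].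
  have ltvm : index v (enum S) < m.
    by rewrite (leq_trans _ leSm) // cardE index_mem mem_enum.
  by exists (Ordinal ltvm); rewrite ffunE (nth_map v) ?nth_index ?index_mem ?mem_enum.
rewrite ffunE; have [lti | lei] := ltnP i (size (enum S)).
  by rewrite (nth_map v) // => -[->]; rewrite -mem_enum mem_nth.
by rewrite nth_default ?size_map.
Qed.

Lemma card_hyp_leq_exp2 H : #|H| <= 2 ^ n.
Proof.
have -> : 2 ^ n = #|powerset [set: V]| by rewrite card_powerset cardsT card_ord.
apply: subset_leq_card.
by apply/subsetP => E _; rewrite powersetE subsetT.
Qed.

Lemma prefix0 : Defs.prefix n 0 = set0.
Proof. by apply/setP => v; rewrite !inE. Qed.

Lemma prefixS i : Defs.prefix n i.+1 = Defs.prefix n i :|: vtx n i.+1.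
Proof. by apply/setP => v; rewrite !inE ltnS leq_eqVlt orbC. Qed.

Lemma vtx_disjoint i S : ~~ (vtx n i \subset S) -> vtx n i :&: S = set0.
Proof.
case/subsetPn => y; rewrite inE => /eqP yi yNS; apply/setP => z; rewrite !inE.
apply/negP => /andP[/eqP zi zS]; case/negP: yNS.
by have -> : y = z by apply: val_inj; rewrite yi zi.
Qed.

Section Retained.
Variables (k : nat) (H : hyp).
Hypothesis k_gt0 : 0 < k.

Lemma retained_sub_prefix i E : E \in retained k H i -> E \subset Defs.prefix n i.
Proof.
elim: i E => [|i IHi] E /=; first by rewrite inE => /eqP->; apply: sub0set.
rewrite inE prefixS => /andP[/exists_inP[E0 /IHi sE0 /orP[]/eqP-> _]].
  exact: subset_trans sE0 (subsetUl _ _).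
exact: setUSS.
Qed.

Lemma retained_trace i E S : E \in retained k H i ->
  S \subset Defs.prefix n i -> #|S| = k -> exists2 F, F \in H & F :&: S = E :&: S.
Proof.
elim: i E S => [|i IHi] E S /=.
  by rewrite prefix0 subset0 => _ /eqP-> cS; move: k_gt0; rewrite -cS cards0.
rewrite inE => /andP[/exists_inP[E0 E0R eqE] okE] sS cS.
have [vS | vNS] := boolP (vtx n i.+1 \subset S).
  have : S \in new_ksets n k i.+1 by rewrite inE sS cS eqxx vS.
  move/(forall_inP okE)/exists_inP => [F FH /eqP eqF].
  by exists F; rewrite // -eqF -setIA (setIidPr sS).
have vS0 := vtx_disjoint vNS.
have sS' : S \subset Defs.prefix n i.
  apply/subsetP => v vS; move/subsetP: sS => /(_ v vS); rewrite prefixS => /setUP[//|vv].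
  by move/setP: vS0 => /(_ v); rewrite in_setI vv vS in_set0.
have [F FH eqF] := IHi E0 S E0R sS' cS; exists F => //; rewrite eqF.
by case/orP: eqE => /eqP-> //; rewrite setIUl vS0 setU0.
Qed.

Lemma shattered_retained i S :
  shattered (retained k H i) S -> #|S| = k -> shattered H S.
Proof.
move=> /shatteredP shS cS.
have sS : S \subset Defs.prefix n i.
  have [E ER ES] := shS S (subxx S).
  by apply: subset_trans (retained_sub_prefix ER); rewrite -ES subsetIl.
apply/shatteredP => T /shS[E ER <-].
by have [F FH eqF] := retained_trace ER sS cS; exists F.
Qed.
End Retained.

Lemma card_retained H i : #|retained (vc_dim H).+1 H i| <= n.+1 ^ vc_dim H.
Proof.
apply: leq_trans (pajor _) (leq_trans _ (card_small_sets (vc_dim H))).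
apply/subset_leq_card/subsetP => S; rewrite !inE => shS; rewrite leqNgt.
apply/negP => /exists_subset_card[S' sS'S cS'].
have := leq_vc_dim (shattered_retained (ltn0Sn _) (sub_shattered sS'S shS) cS').
by rewrite cS' ltnn.
Qed.
End Hypergraphs.

Section DualizeCost.
Variables (n : nat) (H G : {set {set 'I_n}}).
Let k := (vc_dim H).+1.
Let L := (trunc_log 2 #|H|).+1.
Let X := n.+1 * #|G|.+1.
Let B := X ^ L.

Lemma X_gt0 : 0 < X. Proof. by rewrite muln_gt0. Qed.

Lemma leq_expX_B e : e <= L -> X ^ e <= B.
Proof. exact/leq_pexp2l/X_gt0. Qed.

Lemma B_gt0 : 0 < B. Proof. by rewrite expn_gt0 X_gt0. Qed.

Lemma leq_X_B : X <= B.
Proof. by rewrite -{1}[X]expn1 leq_expX_B. Qed.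

Lemma ltn_n_B : n < B.
Proof. exact: leq_trans (leq_pmulr _ (ltn0Sn _)) leq_X_B. Qed.

Lemma ltn_G_B : #|G| < B.
Proof. exact: leq_trans (leq_pmull _ (ltn0Sn _)) leq_X_B. Qed.

Lemma card_H_le_B : #|H| <= B.
Proof.
have [n0 | n_gt0] := posnP n.
  by apply: leq_trans (card_hyp_leq_exp2 H) (leq_trans _ B_gt0); rewrite n0.
apply/ltnW/(leq_trans (trunc_log_ltn #|H| (ltnSn 1))).
rewrite /B leq_exp2r //; apply: leq_trans (leq_pmulr _ (ltn0Sn _)).
by rewrite ltnS.
Qed.

Lemma leq_k_L : k <= L.
Proof. by rewrite ltnS vc_dim_leq_log. Qed.

Lemma leq_expk_B : n.+1 ^ k <= B.
Proof.
apply: leq_trans (leq_expX_B leq_k_L).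
by rewrite leq_exp2r // leq_pmulr.
Qed.

Lemma card_small_le_B : #|[set S : {set 'I_n} | #|S| <= k]| <= B.
Proof. exact: leq_trans (card_small_sets n k) leq_expk_B. Qed.

Lemma card_retained_le_B i : #|retained k H i| <= B.
Proof.
apply: leq_trans (card_retained H i) (leq_trans _ leq_expk_B).
exact: leq_pexp2l.
Qed.

Lemma trace_check_le : cost_trace_check H <= B ^ 2.
Proof. by rewrite /cost_trace_check; have := ltn_n_B; have := card_H_le_B; nia. Qed.

Lemma sub_transversal_le (T : {set 'I_n}) :
  #|T| <= k -> n * #|G| ^ #|T|.+1 <= B ^ 3.
Proof.
move=> leTk; rewrite [B ^ 3]expnS leq_mul ?(ltnW ltn_n_B) //.
have leGX : #|G| <= X := leq_trans (leqnSn _) (leq_pmull _ (ltn0Sn _)).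
apply: leq_trans (_ : X ^ L.+1 <= _); last by rewrite (expnS X L) -mulnn leq_mul ?leq_X_B.
apply: (@leq_trans (X ^ #|T|.+1)); first by rewrite leq_exp2r.
by rewrite leq_pexp2l ?X_gt0 // ltnS (leq_trans leTk leq_k_L).
Qed.

Lemma card_ktraces_le : #|[pred TS | @is_ktrace n k TS]| <= B ^ 2.
Proof.
pose A := [set S : {set 'I_n} | #|S| <= k].
apply: leq_trans (_ : #|setX A A| <= _).
  apply/subset_leq_card/subsetP => -[T S]; rewrite unfold_in => /andP[/eqP /= cS sTS].
  by rewrite !inE /= cS leqnn andbT -cS subset_leq_card.
by rewrite cardsX -mulnn leq_mul ?card_small_le_B.
Qed.

Lemma cost_step1_le : cost_step1 H G k <= 2 * B ^ 5.
Proof.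
rewrite /cost_step1.
apply: (@leq_trans (\sum_(TS | is_ktrace k TS) (B ^ 2 + B ^ 3))).
  apply: leq_sum => -[T S] /andP[/eqP /= cS sTS]; rewrite leq_add ?trace_check_le //.
  by case: ifP => // _; rewrite sub_transversal_le // -cS subset_leq_card.
rewrite sum_nat_const; apply: leq_trans (leq_mul card_ktraces_le (leqnn _)) _.
by have := B_gt0; nia.
Qed.

Lemma card_new_ksets_le_B i : #|new_ksets n k i| <= B.
Proof.
apply/(leq_trans _ card_small_le_B)/subset_leq_card/subsetP => S.
by rewrite !inE => /andP[/andP[_ /eqP->] _].
Qed.

Lemma cost_stage_le i : cost_stage H k i <= 5 * B ^ 4.
Proof.
rewrite /cost_stage; apply: (@leq_trans (2 * B * (B * B ^ 2).+1).+1); last first.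
  by have := B_gt0; nia.
rewrite ltnS leq_mul ?ltnS ?leq_mul //.
all: by rewrite ?card_retained_le_B ?card_new_ksets_le_B ?trace_check_le.
Qed.

Lemma cost_step2_le : cost_step2 H G k <= 7 * B ^ 5.
Proof.
rewrite /cost_step2; apply: (@leq_trans (n * (5 * B ^ 4) + B * (B * B ^ 2 + B ^ 3))).
  apply: leq_add.
    apply: (@leq_trans (\sum_(1 <= i < n.+1) 5 * B ^ 4)).
      by apply: leq_sum => i _; apply: cost_stage_le.
    by rewrite sum_nat_const_nat subn1.
  rewrite sum_nat_const leq_mul ?card_retained_le_B ?leq_add ?leq_mul //;
    rewrite ?trace_check_le ?card_H_le_B //.
  change (n * n * #|G| < B * (B * B)); rewrite mulnC.
  exact: ltn_mul ltn_G_B (ltn_mul ltn_n_B ltn_n_B).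
(* Clearing the body of [B] keeps [expnS] from unfolding it. *)
have := ltn_n_B; clearbody B => ltn_n_B'; rewrite !expnS expn0 !muln1; nia.
Qed.

Lemma dualize_cost_le : dualize_cost H G k <= 10 * B ^ 5.
Proof.
rewrite /dualize_cost; have := cost_step1_le; have := cost_step2_le; have := B_gt0.
by clearbody B; rewrite !expnS expn0 !muln1; nia.
Qed.
End DualizeCost.

Theorem corollary5 :
  exists c : nat, forall (n : nat) (H G : {set {set 'I_n}}),
    sperner H -> sperner G ->
    G \subset Tr H -> H \subset Tr G ->
    dualize_cost H G (vc_dim H).+1
      <= c * (n.+1 * (#|G|).+1) ^ (c * (trunc_log 2 #|H|).+1).
Proof.
exists 10 => n H G _ _ _ _.
apply: leq_trans (dualize_cost_le H G) _.
rewrite leq_mul2l /= -expnM leq_pexp2l ?muln_gt0 //.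
by rewrite mulnC leq_mul2r.
Qed.
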